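(* Let $n\ge1$, let $(H_k)_{k=0}^{n-1}$ and $(G_j)_{j=0}^{n-1}$ be two indexed families of $n\times n$ Hadamard matrices, and let $\mathcal P$ and $\mathcal Q$ be left orthogonal Latin squares of order $n$. Then the bases $B(\mathcal P,(H_k))$ and $B(\mathcal Q,(G_j))$ of $\mathbb C^n\otimes\mathbb C^n$ are mutually unbiased: $|\langle a|b\rangle|^2=\frac1{n^2}$ for every state $\ket a$ of the first and every state $\ket b$ of the second.
   Context: $\{\ket k\}_{k=0}^{n-1}$ is the computational basis of $\mathbb C^n$. A quantum Latin square (QLS) of order $n$ is an $n\times n$ array of vectors of $\mathbb C^n$ in which every row and column is an orthonormal basis; the entry in column $i$, row $j$ of $\mathcal Q$ is $\ket{Q_{ij}}$. A Latin square is a QLS all of whose entries are computational basis states; identify it with labels $L_{ij}\in\{0,\dots,n-1\}$. Two Latin squares $A,B$ are orthogonal if the pairs $(A_{ij},B_{ij})$ over all positions give all $n^2$ pairs of labels. The left conjugate $L'$ of a Latin square $L$ is defined by $L'_{ik}=j$ iff $L_{ij}=k$; two Latin squares are left orthogonal if their left conjugates are orthogonal. A Hadamard matrix of order $n$ is an $n\times n$ complex matrix $H$ with $|H_{ij}|=1$ and $HH^\dagger=H^\dagger H=nI_n$. Given a QLS $\mathcal Q$ and Hadamards $(H_j)_{j=0}^{n-1}$, $B(\mathcal Q,(H_j))$ is the orthonormal basis of $\mathbb C^n\otimes\mathbb C^n$ consisting of $A_{ij}=\frac1{\sqrt n}\sum_{k}\ket k\otimes\ket{Q_{kj}}\bra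 kH_j\ket i$, $i,j\in\{0,\dots,n-1\}$. *)

From HB Require Import structures.
From mathcomp Require Import all_boot all_order all_algebra all_field.
Set Implicit Arguments. Unset Strict Implicit. Unset Printing Implicit Defensive.
Import Order.TTheory GRing.Theory Num.Theory.
Local Open Scope ring_scope.

(* A Latin square of order n: L i j = label of the entry in column i, row j. *)
Definition latin_square (n : nat) (L : 'I_n -> 'I_n -> 'I_n) : Prop :=
  (forall i, injective (L i)) /\ (forall j, injective (fun i => L i j)).

Definition orthogonal_ls (n : nat) (A B : 'I_n -> 'I_n -> 'I_n) : Prop :=
  forall a b : 'I_n, exists i j, A i j = a /\ B i j = b.

(* Left conjugate: L'_{ik} = j iff L_{ij} = k. *)
Definition left_conjugate (n : nat) (L : 'I_n -> 'I_n -> 'I_n) : 'I_n -> 'I_n -> 'I_n :=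
  fun i k => odflt i [pick j | L i j == k].

Definition left_orthogonal (n : nat) (A B : 'I_n -> 'I_n -> 'I_n) : Prop :=
  orthogonal_ls (left_conjugate A) (left_conjugate B).

Definition adjmx (n : nat) (H : 'M[algC]_n) : 'M[algC]_n := (map_mx Num.conj H)^T.

Definition hadamard (n : nat) (H : 'M[algC]_n) : Prop :=
  (forall i j, `|H i j| = 1) /\
  H *m adjmx H = (n%:R : algC)%:M /\ adjmx H *m H = (n%:R : algC)%:M.

(* Vectors of C^n (x) C^n, indexed by pairs (k, l) <-> |k> (x) |l>. *)
Definition inner (n : nat) (a b : 'I_n * 'I_n -> algC) : algC :=
  \sum_(x : 'I_n * 'I_n) (a x)^* * b x.

(* The state A_ij of B(Q, (H_j)) for a Latin square L (Q_kj = |L k j>):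
   A_ij = 1/sqrt n * sum_k |k> (x) |L k j> <k|H_j|i>. *)
Definition Bstate (n : nat) (L : 'I_n -> 'I_n -> 'I_n) (H : 'I_n -> 'M[algC]_n)
  (i j : 'I_n) : 'I_n * 'I_n -> algC :=
  fun x => (x.2 == L x.1 j)%:R * H j x.1 i / sqrtC (n%:R).

From HB Require Import structures.
From mathcomp Require Import all_boot all_order all_algebra all_field.
Set Implicit Arguments. Unset Strict Implicit. Unset Printing Implicit Defensive.
Import Order.TTheory GRing.Theory Num.Theory.
Local Open Scope ring_scope.

(* The state [Bstate L H i j] is supported on the n pairs [(k, L k j)], so
   the inner product of two such states only collects the k with
   [P k j = Q k j'], each term being a product of two unimodular Hadamard
   entries divided by n.  Writing P', Q' for the left conjugates, such a k
   gives the position [(k, P k j)] where [(P', Q')] takes the value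
   [(j, j')]; left orthogonality makes [(P', Q')] a bijection of positions
   onto pairs of labels, so there is exactly one such k and the inner product
   has modulus 1/n. *)

Lemma ontoF_inj (T : finType) (f : T -> T) :
  (forall y, y \in codom f) -> injective f.
Proof.
move=> onto_f; pose g y := iinv (onto_f y).
have gK : cancel g f by move=> y; exact: f_iinv.
exact/can_inj/(canF_sym gK).
Qed.

Lemma left_conjugateE (n : nat) (L : 'I_n -> 'I_n -> 'I_n) k l j :
  injective (L k) -> (left_conjugate L k l == j) = (L k j == l).
Proof.
move=> injLk; rewrite /left_conjugate.
case: pickP => [j0 /eqP Lkj0|noj] /=.
  by apply/eqP/eqP => [<-//|Lkj]; apply: injLk; rewrite Lkj0 Lkj.
have /codomP [j1 l_def] : l \in codom (L k) by apply: inj_card_onto.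
by move: (noj j1); rewrite l_def eqxx.
Qed.

Lemma left_orthogonal_common_entry (n : nat) (P Q : 'I_n -> 'I_n -> 'I_n) :
  (forall k, injective (P k)) -> (forall k, injective (Q k)) ->
  left_orthogonal P Q ->
  forall j j', exists k0, forall k, (P k j == Q k j') = (k == k0).
Proof.
move=> injP injQ PQ j j'.
pose f x := (left_conjugate P x.1 x.2, left_conjugate Q x.1 x.2).
have injf : injective f.
  apply: ontoF_inj => -[a b]; have [k [l [Pkl Qkl]]] := PQ a b.
  by apply/codomP; exists (k, l); rewrite /f /= Pkl Qkl.
have [k0 [l0 [P'k0 Q'k0]]] := PQ j j'.
have Pk0 : P k0 j = l0 by apply/eqP; rewrite -left_conjugateE // P'k0.
have Qk0 : Q k0 j' = l0 by apply/eqP; rewrite -left_conjugateE // Q'k0.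
exists k0 => k; apply/eqP/eqP => [PQk|->]; last by rewrite Pk0 Qk0.
have: f (k, P k j) = f (k0, l0).
  rewrite /f /= P'k0 Q'k0; congr pair; apply/eqP; rewrite left_conjugateE //.
  by rewrite PQk.
by move/injf => [].
Qed.

Lemma inner_Bstate (n : nat) (L M : 'I_n -> 'I_n -> 'I_n)
    (H G : 'I_n -> 'M[algC]_n) i j i' j' :
  inner (Bstate L H i j) (Bstate M G i' j') =
  (\sum_(k | L k j == M k j') (H j k i)^* * G j' k i') / n%:R.
Proof.
have sqrt_nK : (sqrtC n%:R)^* * sqrtC n%:R = n%:R :> algC.
  by rewrite geC0_conj ?sqrtC_ge0 ?ler0n // -expr2 sqrtCK.
rewrite /inner /Bstate -(pair_bigA _ (fun k l =>
  ((l == L k j)%:R * H j k i / sqrtC n%:R)^* *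
  ((l == M k j')%:R * G j' k i' / sqrtC n%:R))) /=.
rewrite (big_mkcond (fun k => L k j == M k j')) mulr_suml.
apply: eq_bigr => k _ /=.
rewrite (bigD1 (L k j)) //= big1 => [|l /negPf Lkj_l]; last first.
  by rewrite Lkj_l !mul0r conjC0 mul0r.
rewrite addr0 eqxx mul1r rmorphM /= fmorphV /=.
case: eqP => _; last by rewrite !(mul0r, mulr0).
by rewrite mul1r mulrACA -invfM sqrt_nK.
Qed.

Theorem corollary27 (n : nat) (Hn : (0 < n)%N)
  (H G : 'I_n -> 'M[algC]_n)
  (HH : forall k, hadamard (H k)) (HG : forall j, hadamard (G j))
  (P Q : 'I_n -> 'I_n -> 'I_n)
  (LP : latin_square P) (LQ : latin_square Q) (PQ : left_orthogonal P Q) :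
  forall i j i' j' : 'I_n,
    `|inner (Bstate P H i j) (Bstate Q G i' j')| ^+ 2 = ((n%:R : algC) ^+ 2)^-1.
Proof.
move=> i j i' j'; rewrite inner_Bstate.
have [k0 common_k0] := left_orthogonal_common_entry LP.1 LQ.1 PQ j j'.
rewrite (eq_bigl (pred1 k0)) // big_pred1_eq.
by rewrite !normrM norm_conjC normfV (HH j).1 (HG j').1 !mul1r normr_nat exprVn.
Qed.
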